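(* Consider an operational theory (describing an experiment) containing a which-way measurement $Z$ and a which-phase measurement $X$, each with outcomes in $\{+1,-1\}$, and suppose some realizable operational state $\vec{s}_1$ satisfies the $A_1^2$-orbit-realizability condition relative to $Z$ and $X$. If the path distinguishability $\mathcal{P}=|\langle Z\rangle_{\vec{s}_1}|$ and fringe visibility $\mathcal{V}=|\langle X\rangle_{\vec{s}_1}|$ of this state satisfy $\mathcal{V}+\mathcal{P}>1$, then the operational theory (experiment) admits no (generalized-)noncontextual ontological model.
   Context: An operational theory (for a single system, prepare-measure scenario) specifies a set of preparations $P$, measurements $M$, and probabilities $\mathbb{P}(y|M,P)$. Each preparation is represented by a real vector $\vec{s}_P$ (its operational state) and each effect $[y|M]$ by a real vector $\vec{e}_{y|M}$ with $\mathbb{P}(y|M,P)=\vec{s}_P\cdot\vec{e}_{y|M}$; two preparations are operationally equivalent iff they have the same vector. The set of realizable operational states is closed under convex mixtures. For a measurement $M$ with outcomes $\pm1$, $\langle M\rangle_{\vec{s}}=\mathbb{P}(+1|M,\vec{s})-\mathbb{P}(-1|M,\vec{s})$. An ontological model assigns a (finite) set $\Lambda$, to each preparation $P$ a distribution $\mu(\lambda|P)$, and to each measurement $M$ a conditional distribution $\xi(y|M,\lambda)$, with $\mathbb{P}(y|M,P)=\sum_\lambda\xi(y|M,\lambda)\mu(\lambda|P)$. It is (generalized, preparation-)noncontextual if operationally equivalent preparations receive the same distribution; in particular $\sum_i w_i\vec{s}_i=\sum_j w'_j\vec{s}'_j$ (probability weights) implies $\sum_i w_i\mu(\cdot|P_i)=\sum_j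 w'_j\mu(\cdot|P'_j)$. A state $\vec{s}_1$ satisfies the $A_1^2$-orbit-realizability condition relative to $M,M'$ if there exist realizable operational states $\vec{s}_2,\vec{s}_3,\vec{s}_4$ with $\langle M\rangle_{\vec{s}_1}=\langle M\rangle_{\vec{s}_2}=-\langle M\rangle_{\vec{s}_3}=-\langle M\rangle_{\vec{s}_4}$, $\langle M'\rangle_{\vec{s}_1}=-\langle M'\rangle_{\vec{s}_2}=-\langle M'\rangle_{\vec{s}_3}=\langle M'\rangle_{\vec{s}_4}$, and $\tfrac12\vec{s}_1+\tfrac12\vec{s}_3=\tfrac12\vec{s}_2+\tfrac12\vec{s}_4$. *)

From HB Require Import structures.
From mathcomp Require Import all_boot all_order all_algebra.
Set Implicit Arguments.
Unset Strict Implicit.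
Unset Printing Implicit Defensive.
Import Order.TTheory GRing.Theory Num.Theory.
Local Open Scope ring_scope.

Definition dotv (R : realFieldType) (d : nat) (s e : 'rV[R]_d) : R :=
  \sum_(i < d) s 0 i * e 0 i.

(* Preparations are represented by operational states (vectors st P),
   effects [y|M] by vectors eff M y, with P(y|M,P) = st P . eff M y. *)
Record opTheory (R : realFieldType) := OpTheory {
  odim : nat;
  Prep : Type;
  Meas : Type;
  Outc : Meas -> finType;
  st : Prep -> 'rV[R]_odim;
  eff : forall M : Meas, Outc M -> 'rV[R]_odim;
  prob_ge0 : forall (P : Prep) (M : Meas) (y : Outc M), 0 <= dotv (st P) (eff y);
  prob_sum1 : forall (P : Prep) (M : Meas), \sum_(y : Outc M) dotv (st P) (eff y) = 1;
  mix_closed : forall (P P' : Prep) (w : R), 0 <= w -> w <= 1 ->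
      exists P'' : Prep, st P'' = w *: st P + (1 - w) *: st P'
}.

Definition oprob (R : realFieldType) (T : opTheory R) (M : Meas T)
  (y : Outc M) (s : 'rV[R]_(odim T)) : R := dotv s (eff y).

Definition realizable (R : realFieldType) (T : opTheory R) (s : 'rV[R]_(odim T)) :=
  exists P : Prep T, st P = s.

Record binMeas (R : realFieldType) (T : opTheory R) := BinMeas {
  bM : Meas T;
  bplus : Outc bM;
  bminus : Outc bM;
  b_distinct : bplus != bminus;
  b_exhaust : forall y : Outc bM, y = bplus \/ y = bminus
}.

Definition expect (R : realFieldType) (T : opTheory R) (M : binMeas T)
  (s : 'rV[R]_(odim T)) : R :=
  oprob (bplus M) s - oprob (bminus M) s.

Definition A12_orbit (R : realFieldType) (T : opTheory R) (M M' : binMeas T)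
  (s1 : 'rV[R]_(odim T)) : Prop :=
  exists s2 s3 s4 : 'rV[R]_(odim T),
    [/\ realizable s2 /\ realizable s3 /\ realizable s4,
        (expect M s1 = expect M s2 /\ expect M s2 = - expect M s3 /\
          - expect M s3 = - expect M s4),
        (expect M' s1 = - expect M' s2 /\ - expect M' s2 = - expect M' s3 /\
          - expect M' s3 = expect M' s4) &
        (1/2) *: s1 + (1/2) *: s3 = (1/2) *: s2 + (1/2) *: s4].

Definition is_ont_model (R : realFieldType) (T : opTheory R) (L : finType)
  (mu : Prep T -> L -> R) (xi : forall M : Meas T, Outc M -> L -> R) : Prop :=
  [/\ (forall P l, 0 <= mu P l),
      (forall P, \sum_(l : L) mu P l = 1),
      (forall M (y : Outc M) l, 0 <= xi M y l),
      (forall M l, \sum_(y : Outc M) xi M y l = 1) &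
      (forall P M (y : Outc M),
          oprob y (st P) = \sum_(l : L) xi M y l * mu P l)].

Definition prob_weights (R : realFieldType) (n : nat) (w : 'I_n -> R) : Prop :=
  (forall i, 0 <= w i) /\ \sum_(i < n) w i = 1.

(* (Generalized, preparation-)noncontextuality: whenever two convex mixtures of
   preparations have the same operational state, the corresponding mixtures of
   ontic distributions coincide.  (With n = m = 1 this says operationally
   equivalent preparations receive the same distribution.) *)
Definition noncontextual (R : realFieldType) (T : opTheory R) (L : finType)
  (mu : Prep T -> L -> R) : Prop :=
  forall (n m : nat) (w : 'I_n -> R) (P : 'I_n -> Prep T)
         (w' : 'I_m -> R) (P' : 'I_m -> Prep T),
    prob_weights w -> prob_weights w' ->
    \sum_(i < n) w i *: st (P i) = \sum_(j < m) w' j *: st (P' j) ->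
    forall l : L, \sum_(i < n) w i * mu (P i) l = \sum_(j < m) w' j * mu (P' j) l.

Definition has_NC_model (R : realFieldType) (T : opTheory R) : Prop :=
  exists (L : finType) (mu : Prep T -> L -> R)
         (xi : forall M : Meas T, Outc M -> L -> R),
    is_ont_model mu xi /\ noncontextual mu.

From HB Require Import structures.
From mathcomp Require Import all_boot all_order all_algebra.
From mathcomp Require Import lra.
Set Implicit Arguments.
Unset Strict Implicit.
Unset Printing Implicit Defensive.
Import Order.TTheory GRing.Theory Num.Theory.
Local Open Scope ring_scope.

(* Suppose the theory has a noncontextual ontological model
   (mu, xi) on a finite ontic space L.  For a binary measurement M let
   r_M(l) = xi(+1|M,l) - xi(-1|M,l) be its response function; it satisfies
   |r_M| <= 1 and <M>_P = sum_l r_M(l) mu(l|P).  Noncontextuality applied to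
   the equal-weight mixture identity of the A_1^2 orbit gives, pointwise,
   mu1 + mu3 = mu2 + mu4.  The orbit relations give
     2 <Z>_1 = <Z>_1 - <Z>_4 = sum_l r_Z (mu1 - mu4),
     2 <X>_1 = <X>_1 - <X>_2 = sum_l r_X (mu1 - mu2),
   hence 2 (|<Z>_1| + |<X>_1|) <= sum_l (|mu1 - mu4| + |mu1 - mu2|), and an
   elementary inequality bounds the summand by mu2 + mu4, whose sum is 2.
   So every A_1^2-orbit-realizable state of a theory with a noncontextual
   model obeys V + P <= 1 (lemma [A12_orbit_noncontextual_bound]); the
   corollary is its contrapositive. *)

Lemma sum_binMeas (R : realFieldType) (T : opTheory R) (M : binMeas T)
    (V : nmodType) (f : Outc (bM M) -> V) :
  \sum_(y : Outc (bM M)) f y = f (bplus M) + f (bminus M).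
Proof.
rewrite (bigD1 (bplus M)) //= (bigD1 (bminus M)) /=; last first.
  by rewrite eq_sym b_distinct.
rewrite big1 ?addr0 // => y /andP[y_plus y_minus].
by case: (b_exhaust y) => ey; rewrite ey eqxx in y_plus y_minus.
Qed.

Lemma orbit_weight_ineq (R : realDomainType) (m1 m2 m3 m4 : R) :
  0 <= m1 -> 0 <= m2 -> 0 <= m3 -> 0 <= m4 -> m1 + m3 = m2 + m4 ->
  `|m1 - m4| + `|m1 - m2| <= m2 + m4.
Proof.
move=> m1_ge0 m2_ge0 m3_ge0 m4_ge0 mix.
case: (lerP 0 (m1 - m4)) => [h4|h4];
  rewrite ?(ger0_norm h4) ?(ltr0_norm h4);
case: (lerP 0 (m1 - m2)) => [h2|h2];
  rewrite ?(ger0_norm h2) ?(ltr0_norm h2); lra.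
Qed.

Lemma bounded_response_sum (R : realDomainType) (L : finType) (r d : L -> R) :
  (forall l, `|r l| <= 1) -> `|\sum_l r l * d l| <= \sum_l `|d l|.
Proof.
move=> r_le1; apply: le_trans (ler_norm_sum _ _ _) _.
apply: ler_sum => l _; rewrite normrM.
by rewrite -[leRHS]mul1r ler_wpM2r.
Qed.

Lemma noncontextual_half_mix (R : realFieldType) (T : opTheory R) (L : finType)
    (mu : Prep T -> L -> R) (P1 P2 P3 P4 : Prep T) :
  noncontextual mu ->
  (1/2) *: st P1 + (1/2) *: st P3 = (1/2) *: st P2 + (1/2) *: st P4 ->
  forall l, mu P1 l + mu P3 l = mu P2 l + mu P4 l.
Proof.
move=> NC emix l.
pose left_mix (i : 'I_2) := if val i == 0%N then P1 else P3.
pose right_mix (i : 'I_2) := if val i == 0%N then P2 else P4.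
have half : prob_weights (fun _ : 'I_2 => 1/2 : R).
  by split=> [i|]; [lra | rewrite !big_ord_recr big_ord0 /=; lra].
have same_state : \sum_(i < 2) (1/2) *: st (left_mix i)
                  = \sum_(j < 2) (1/2) *: st (right_mix j).
  by rewrite !big_ord_recr !big_ord0 /= !add0r.
have := NC 2%N 2%N _ left_mix _ right_mix half half same_state l.
rewrite !big_ord_recr !big_ord0 /= !add0r; lra.
Qed.

Section OntologicalModel.

Variables (R : realFieldType) (T : opTheory R) (L : finType).
Variables (mu : Prep T -> L -> R) (xi : forall M : Meas T, Outc M -> L -> R).
Hypothesis model : is_ont_model mu xi.

Definition response (M : binMeas T) (l : L) : R :=
  xi (bplus M) l - xi (bminus M) l.

(* Responses are differences of two probabilities summing to one. *)
Lemma response_bound (M : binMeas T) l : `|response M l| <= 1.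
Proof.
case: model => _ _ xi_ge0 xi_sum1 _.
have := xi_sum1 (bM M) l; rewrite sum_binMeas => sum1.
have := xi_ge0 _ (bplus M) l; have := xi_ge0 _ (bminus M) l.
by rewrite ler_norml /response => ? ?; apply/andP; split; lra.
Qed.

Lemma expect_model (M : binMeas T) (P : Prep T) :
  expect M (st P) = \sum_l response M l * mu P l.
Proof.
case: model => _ _ _ _ reproduce.
rewrite /expect !reproduce -sumrB.
by apply: eq_bigr => l _; rewrite mulrBl.
Qed.

Lemma expect_diff_bound (M : binMeas T) (P P' : Prep T) :
  `|expect M (st P) - expect M (st P')| <= \sum_l `|mu P l - mu P' l|.
Proof.
rewrite !expect_model -sumrB.
under eq_bigr do rewrite -mulrBr.
by apply: bounded_response_sum => l; apply: response_bound.
Qed.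

End OntologicalModel.

Lemma A12_orbit_noncontextual_bound (R : realFieldType) (T : opTheory R)
    (Z X : binMeas T) (s1 : 'rV[R]_(odim T)) :
  has_NC_model T -> realizable s1 -> A12_orbit Z X s1 ->
  `|expect X s1| + `|expect Z s1| <= 1.
Proof.
move=> [L [mu [xi [model NC]]]] [P1 <-].
move=> [_ [_ [_ [[[P2 <-] [[P3 <-] [P4 <-]]] [z12 [z23 z34]] [x12 [x23 x34]] emix]]]].
have mix := noncontextual_half_mix NC emix.
have [mu_ge0 mu_sum1 _ _ _] := model.
have twiceZ : 2 * `|expect Z (st P1)| = `|expect Z (st P1) - expect Z (st P4)|.
  by rewrite -[2]ger0_norm // -normrM; congr `|_|; lra.
have twiceX : 2 * `|expect X (st P1)| = `|expect X (st P1) - expect X (st P2)|.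
  by rewrite -[2]ger0_norm // -normrM; congr `|_|; lra.
have total : \sum_l (`|mu P1 l - mu P4 l| + `|mu P1 l - mu P2 l|) <= 2.
  apply: le_trans (_ : \sum_l (mu P2 l + mu P4 l) <= 2).
    apply: ler_sum => l _; apply: orbit_weight_ineq (mix l); exact: mu_ge0.
  by rewrite big_split /= !mu_sum1; lra.
have := expect_diff_bound model Z P1 P4; have := expect_diff_bound model X P1 P2.
rewrite big_split /= in total; lra.
Qed.

Theorem corollary2 (R : realFieldType) (T : opTheory R) (Z X : binMeas T)
  (s1 : 'rV[R]_(odim T)) :
  realizable s1 ->
  A12_orbit Z X s1 ->
  `|expect X s1| + `|expect Z s1| > 1 ->
  ~ has_NC_model T.
Proof.
move=> s1_real orbit VP_gt1 NCmodel.
have := A12_orbit_noncontextual_bound NCmodel s1_real orbit.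
by rewrite leNgt VP_gt1.
Qed.
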